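(* Let $\Gamma$ be an abelian group and $A$ a $\Gamma$-graded $*$-ring. (a) If $A$ has no infinite set of nonzero, pairwise orthogonal, homogeneous projections, then $A$ is a graded Rickart $*$-ring if and only if $A$ is a graded Baer $*$-ring. (b) If for every homogeneous projection $p$ the corner $pAp$ has no infinite set of nonzero, pairwise orthogonal, homogeneous projections, then $A$ is a graded locally Rickart $*$-ring if and only if $A$ is a graded locally Baer $*$-ring.
   Context: Graded $*$-ring: $A=\bigoplus_\gamma A_\gamma$, $A_\gamma A_\delta\subseteq A_{\gamma+\delta}$, with involution $*$ such that $A_\gamma^*\subseteq A_{-\gamma}$. Projection: $p=p^2=p^*$; projections $p,q$ are orthogonal if $pq=0$. Graded Rickart $*$-ring: the right annihilator of every homogeneous element is generated as a right ideal by a homogeneous projection. Graded Baer $*$-ring: the right annihilator of every set of homogeneous elements is generated as a right ideal by a homogeneous projection. $A$ is a graded locally Rickart (resp. Baer) $*$-ring if $pAp$ is a graded Rickart (resp. Baer) $*$-ring for every homogeneous projection $p$. *)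

(* Non-unital rings are allowed: the ring is an additive
   group A (zmodType) with an explicit multiplication and involution. *)
From HB Require Import structures.
From mathcomp Require Import all_boot all_order all_algebra.
Set Implicit Arguments. Unset Strict Implicit. Unset Printing Implicit Defensive.
Import GRing.Theory.
Local Open Scope ring_scope.

Section GradedStar.
Variables (Gam A : zmodType) (mul : A -> A -> A) (star : A -> A)
          (G : Gam -> A -> Prop).

Record is_star_ring : Prop := {
  mulA : forall x y z, mul x (mul y z) = mul (mul x y) z;
  mulDl : forall x y z, mul (x + y) z = mul x z + mul y z;
  mulDr : forall x y z, mul x (y + z) = mul x y + mul x z;
  starD : forall x y, star (x + y) = star x + star y;
  starM : forall x y, star (mul x y) = mul (star y) (star x);
  starK : forall x, star (star x) = x
}.

Record is_grading : Prop := {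
  grad0 : forall g, G g 0;
  gradB : forall g x y, G g x -> G g y -> G g (x - y);
  grad_span : forall x, exists s : seq (Gam * A),
      uniq (map fst s) /\ (forall c, c \in s -> G c.1 c.2) /\
      x = \sum_(c <- s) c.2;
  grad_indep : forall s : seq (Gam * A),
      uniq (map fst s) -> (forall c, c \in s -> G c.1 c.2) ->
      \sum_(c <- s) c.2 = 0 -> forall c, c \in s -> c.2 = 0
}.

Definition is_graded_star_ring : Prop :=
  [/\ is_star_ring, is_grading,
      (forall g d x y, G g x -> G d y -> G (g + d) (mul x y)) &
      (forall g x, G g x -> G (- g) (star x))].

Definition homog (x : A) : Prop := exists g, G g x.
Definition is_proj (p : A) : Prop := mul p p = p /\ star p = p.
Definition hproj (p : A) : Prop := is_proj p /\ homog p.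

Definition corner (p : A) : A -> Prop := fun y => exists a, y = mul p (mul a p).
Definition whole : A -> Prop := fun _ => True.

(* In the ring S (A itself or a corner pAp, with grading S ∩ A_gamma),
   the right annihilator of X is the right ideal q S. *)
Definition rann_gen_by (S X : A -> Prop) (q : A) : Prop :=
  forall y, (S y /\ forall x, X x -> mul x y = 0) <->
            (exists z, S z /\ y = mul q z).

Definition graded_rickart_on (S : A -> Prop) : Prop :=
  forall x, S x -> homog x ->
    exists q, S q /\ hproj q /\ rann_gen_by S (fun w => w = x) q.

Definition graded_baer_on (S : A -> Prop) : Prop :=
  forall X : A -> Prop, (forall x, X x -> S x /\ homog x) ->
    exists q, S q /\ hproj q /\ rann_gen_by S X q.

Definition graded_rickart : Prop := graded_rickart_on whole.
Definition graded_baer : Prop := graded_baer_on whole.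
Definition graded_locally_rickart : Prop :=
  forall p, hproj p -> graded_rickart_on (corner p).
Definition graded_locally_baer : Prop :=
  forall p, hproj p -> graded_baer_on (corner p).

Definition no_inf_orth (S : A -> Prop) : Prop :=
  forall P : A -> Prop,
    (forall q, P q -> S q /\ hproj q /\ q <> 0) ->
    (forall q r, P q -> P r -> q <> r -> mul q r = 0) ->
    exists l : seq A, forall q, P q -> q \in l.

End GradedStar.

From Pilot Require Import Defs.
From HB Require Import structures.
From mathcomp Require Import all_boot all_order all_algebra.
From mathcomp Require Import zify.
From Stdlib Require Import Classical ClassicalEpsilon.
Set Implicit Arguments. Unset Strict Implicit. Unset Printing Implicit Defensive.
Import GRing.Theory.
Local Open Scope ring_scope.

(* Homogeneous projections have degree 0.  Let S = pAp be a corner and X a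
   set of homogeneous elements of S.  If a degree-0 projection e of S is a left
   identity on the right annihilator of X but x e <> 0 for some x in X, then
   the Rickart projection q of the homogeneous element x e commutes with e, and
   q e is a strictly smaller projection with the same property.  Starting from
   p this must stop, since otherwise the differences of the decreasing chain
   form an infinite orthogonal family of nonzero homogeneous projections; the
   final projection generates the right annihilator of X.  For the whole ring,
   the Rickart projection of 0 is an identity of degree 0, so A itself is such
   a corner. *)

Section StarRing.
Variables (A : zmodType) (mul : A -> A -> A) (star : A -> A).
Hypothesis hs : is_star_ring mul star.
Local Notation "x ⋅ y" := (mul x y) (at level 40, left associativity).
Local Notation mulA := (Defs.mulA hs).

Lemma mulBl x y z : (x - y) ⋅ z = x ⋅ z - y ⋅ z.
Proof. by apply/eqP; rewrite eq_sym subr_eq -(mulDl hs) subrK. Qed.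

Lemma mulBr x y z : z ⋅ (x - y) = z ⋅ x - z ⋅ y.
Proof. by apply/eqP; rewrite eq_sym subr_eq -(mulDr hs) subrK. Qed.

Lemma mul0l y : 0 ⋅ y = 0.
Proof. by have := mulBl 0 0 y; rewrite !subrr. Qed.

Lemma starB x y : star (x - y) = star x - star y.
Proof. by apply/eqP; rewrite eq_sym subr_eq -(starD hs) subrK. Qed.

Lemma proj_mulC e f :
  is_proj mul star e -> is_proj mul star f -> e ⋅ f = f -> f ⋅ e = f.
Proof.
by move=> [_ se] [_ sf] ef; rewrite -{1}se -{1}sf -(starM hs) ef.
Qed.

Section DecreasingChain.
Variable E : nat -> A.
Hypothesis E_proj : forall n, is_proj mul star (E n).
Hypothesis E_decr : forall n, E n ⋅ E n.+1 = E n.+1.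

Lemma chain_mulr m n : (m <= n)%N -> E m ⋅ E n = E n.
Proof.
move=> /subnKC <-; elim: (n - m)%N => [|k IHk].
  by rewrite addn0 (proj1 (E_proj m)).
by rewrite addnS -(E_decr (m + k)) mulA IHk.
Qed.

Lemma chain_mull m n : (m <= n)%N -> E n ⋅ E m = E n.
Proof. by move=> le_mn; apply: proj_mulC; rewrite ?chain_mulr. Qed.

Definition chain_diff n := E n - E n.+1.

Lemma chain_diff_mul i j : chain_diff i ⋅ chain_diff j =
  (E i ⋅ E j - E i ⋅ E j.+1) - (E i.+1 ⋅ E j - E i.+1 ⋅ E j.+1).
Proof. by rewrite mulBl !mulBr. Qed.

Lemma chain_diff_proj n : is_proj mul star (chain_diff n).
Proof.
split; last by rewrite starB (proj2 (E_proj n)) (proj2 (E_proj n.+1)).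
rewrite chain_diff_mul (chain_mulr (leqnSn n)) (chain_mull (leqnSn n)).
by rewrite (proj1 (E_proj n)) (proj1 (E_proj n.+1)) subrr subr0.
Qed.

Lemma chain_diff_orth (i j : nat) : i != j -> chain_diff i ⋅ chain_diff j = 0.
Proof.
rewrite chain_diff_mul; case: ltngtP => // [lt_ij | lt_ji] _.
- by rewrite !chain_mulr ?subrr //; lia.
- by rewrite !chain_mull ?subrr //; lia.
Qed.

End DecreasingChain.
End StarRing.

Lemma graded_rickart_of_baer (Gam A : zmodType) (mul : A -> A -> A)
    (star : A -> A) (G : Gam -> A -> Prop) (S : A -> Prop) :
  graded_baer_on mul star G S -> graded_rickart_on mul star G S.
Proof. by move=> baer x Sx hx; apply: baer => w ->. Qed.

Section Graded.
Variables (Gam A : zmodType) (mul : A -> A -> A) (star : A -> A)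
          (G : Gam -> A -> Prop).
Hypotheses (hs : is_star_ring mul star) (hg : is_grading G).
Hypothesis hmul : forall g d x y, G g x -> G d y -> G (g + d) (mul x y).
Local Notation "x ⋅ y" := (mul x y) (at level 40, left associativity).
Local Notation mulA := (Defs.mulA hs).
Local Notation is_proj := (is_proj mul star).
Local Notation hproj := (hproj mul star G).

Lemma grading_uniq g h x : G g x -> G h x -> g != h -> x = 0.
Proof.
move=> Ggx Ghx ne_gh.
have GhNx : G h (- x) by rewrite -sub0r; apply: gradB (grad0 hg h) Ghx.
apply: (grad_indep hg (s := [:: (g, x); (h, - x)])) (mem_head _ _) => /=.
- by rewrite inE ne_gh.
- by move=> c; rewrite !inE => /orP[] /eqP ->.
- by rewrite !big_cons big_nil addr0 subrr.
Qed.

(* A homogeneous idempotent of degree g is also of degree g + g. *)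
Lemma hproj_grade0 p : hproj p -> G 0 p.
Proof.
move=> [[pp _] [g Ggp]].
have Ggg : G (g + g) p by rewrite -pp; apply: hmul.
case: (eqVneq g (g + g)) => [g_gg | ne].
  by have <- : g = 0 by apply: (@addrI _ g); rewrite addr0 -g_gg.
by rewrite (grading_uniq Ggp Ggg ne); apply: grad0.
Qed.

Lemma no_inf_orth_seq (S : A -> Prop) (f : nat -> A) :
    no_inf_orth mul star G S ->
    (forall n, [/\ S (f n), hproj (f n) & f n <> 0]) ->
    (forall i j, i != j -> f i ⋅ f j = 0) -> False.
Proof.
move=> noinf f_hproj f_orth.
have f_inj : injective f.
  move=> i j fij; case: (eqVneq i j) => // /f_orth fij0.
  by case: (f_hproj i) => _ [[fi _] _] []; rewrite -fi {2}fij.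
have [l f_in_l] : exists l : seq A, forall q, (exists n, q = f n) -> q \in l.
  apply: noinf => [q [n ->] | q r [i ->] [j ->] ne_fij].
    by case: (f_hproj n).
  by apply: f_orth; apply: contraPneq ne_fij => ->.
have : (size (map f (iota 0 (size l).+1)) <= size l)%N.
  apply: uniq_leq_size; first by rewrite (map_inj_uniq f_inj) iota_uniq.
  by move=> q /mapP [n _ ->]; apply: f_in_l; exists n.
by rewrite size_map size_iota ltnn.
Qed.

Section Corner.
Variables (S : A -> Prop) (p : A).
Hypotheses (p_proj : is_proj p) (p_grade0 : G 0 p).
Hypothesis S_corner : forall y, S y <-> p ⋅ y = y /\ y ⋅ p = y.

Lemma corner_unit : S p.
Proof. by apply/S_corner; rewrite (proj1 p_proj). Qed.

Lemma corner_sub x y : S x -> S y -> S (x - y).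
Proof.
move=> /S_corner [px xp] /S_corner [py yp].
by apply/S_corner; rewrite (mulBl hs) (mulBr hs) // px py xp yp.
Qed.

Lemma corner_mul x y : S x -> S y -> S (x ⋅ y).
Proof.
move=> /S_corner [px _] /S_corner [_ yp].
by apply/S_corner; rewrite mulA px -mulA yp.
Qed.

Lemma rann_gen_fix X q y : rann_gen_by mul S X q -> is_proj q ->
  S y -> (forall x, X x -> x ⋅ y = 0) -> q ⋅ y = y.
Proof.
move=> q_gen [qq _] Sy y_ann.
by have [z [_ ->]] := (q_gen y).1 (conj Sy y_ann); rewrite mulA qq.
Qed.

Lemma rann_gen_ann X q x : rann_gen_by mul S X q -> S q -> X x -> x ⋅ q = 0.
Proof.
move=> q_gen Sq Xx; have [_ qp] := (S_corner q).1 Sq.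
have /(q_gen q).2 [_ q_ann] : exists z, S z /\ q = q ⋅ z.
  by exists p; split; [apply: corner_unit | rewrite qp].
exact: q_ann.
Qed.

Definition rann_majorant (X : A -> Prop) e := [/\ S e, is_proj e, G 0 e &
  forall y, S y -> (forall x, X x -> x ⋅ y = 0) -> e ⋅ y = y].

Lemma rann_majorant_unit X : rann_majorant X p.
Proof. by split=> // [|y /S_corner[]]; first exact: corner_unit. Qed.

Lemma rann_gen_majorant X e : rann_majorant X e ->
  (forall x, X x -> x ⋅ e = 0) -> rann_gen_by mul S X e.
Proof.
move=> [Se _ _ e_fix] e_ann y; split=> [[Sy y_ann] | [z [Sz ->]]].
  by exists y; rewrite e_fix.
split; first exact: corner_mul.
by move=> x Xx; rewrite mulA e_ann ?(mul0l hs).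
Qed.

Hypothesis rick : graded_rickart_on mul star G S.

Lemma rann_majorant_shrink X e x :
    (forall x, X x -> S x /\ homog G x) ->
    rann_majorant X e -> X x -> x ⋅ e <> 0 ->
  exists2 e', rann_majorant X e' & e ⋅ e' = e' /\ e' <> e.
Proof.
move=> X_sub [Se e_proj e0 e_fix] Xx xe_nz.
have [Sx [g Ggx]] := X_sub x Xx.
have [[ee se] [pe ep]] := (e_proj, (S_corner e).1 Se).
have [q [Sq [q_hproj q_gen]]] :=
  rick (corner_mul Sx Se) (ex_intro _ (g + 0) (hmul Ggx e0)).
have [[[qq sq] _] q0] := (q_hproj, hproj_grade0 q_hproj).
have xeq : x ⋅ e ⋅ q = 0 by apply: rann_gen_ann q_gen Sq _.
have q_pe : q ⋅ (p - e) = p - e.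
  apply: rann_gen_fix q_gen (conj qq sq) (corner_sub corner_unit Se) _.
  by move=> _ ->; rewrite (mulBr hs) -!mulA ep ee subrr.
(* q e = q - (p - e) is self-adjoint, so q and e commute *)
have qe : q ⋅ e = q - (p - e).
  by rewrite -q_pe (mulBr hs) (proj2 ((S_corner q).1 Sq)) opprB addrC subrK.
have eq_qe : e ⋅ q = q ⋅ e.
  by rewrite -se -sq -(starM hs) qe !(starB hs) sq se (proj2 p_proj).
exists (q ⋅ e); last split.
- split; first exact: corner_mul.
  + split; last by rewrite (starM hs) se sq.
    by rewrite mulA -[q ⋅ e ⋅ q]mulA eq_qe mulA qq -mulA ee.
  + by rewrite -[0](addr0 0); apply: hmul.
  + move=> y Sy y_ann; rewrite -mulA e_fix //.
    apply: rann_gen_fix q_gen (conj qq sq) (Sy) _ => _ ->.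
    by rewrite -mulA e_fix // y_ann.
- by rewrite mulA eq_qe -mulA ee.
- by move=> qe_e; apply: xe_nz; rewrite -xeq -mulA eq_qe qe_e.
Qed.

Hypothesis noinf : no_inf_orth mul star G S.

Lemma rann_majorant_annihilated X :
    (forall x, X x -> S x /\ homog G x) ->
  exists e, rann_majorant X e /\ forall x, X x -> x ⋅ e = 0.
Proof.
move=> X_sub; apply: NNPP => none.
have shrink e : exists e', rann_majorant X e ->
    [/\ rann_majorant X e', e ⋅ e' = e' & e' <> e].
  have [He|] := classic (rann_majorant X e); last by exists e.
  have [x Xx xe_nz] : exists2 x, X x & x ⋅ e <> 0.
    apply: NNPP => all_ann; apply: none; exists e; split=> // x Xx.
    by apply: NNPP => xe_nz; apply: all_ann; exists x.
  have [e' He' [ee' ne]] := rann_majorant_shrink X_sub He Xx xe_nz.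
  by exists e'.
have [F F_shrink] := choice _ shrink.
pose E n := iter n F p.
have E_maj n : rann_majorant X (E n).
  by elim: n => [|n IHn]; [apply: rann_majorant_unit | case: (F_shrink _ IHn)].
have E_proj n : is_proj (E n) by case: (E_maj n).
have E_decr n : E n ⋅ E n.+1 = E n.+1 by case: (F_shrink _ (E_maj n)).
apply: (@no_inf_orth_seq S (chain_diff E) noinf)
  => [n | i j /(chain_diff_orth hs E_proj E_decr) //].
have [[SEn _ En0 _] [SEn1 _ En10 _]] := (E_maj n, E_maj n.+1).
split.
- exact: corner_sub.
- split; first exact: (chain_diff_proj hs E_proj E_decr n).
  by exists 0; apply: gradB.
- move/subr0_eq => E_eq; case: (F_shrink _ (E_maj n)) => _ _; apply.
  exact: esym E_eq.
Qed.

Lemma corner_graded_baer : graded_baer_on mul star G S.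
Proof.
move=> X X_sub; have [e [He e_ann]] := rann_majorant_annihilated X_sub.
exists e; case: (He) => Se e_proj e0 _.
by split=> //; split; [split=> //; exists 0 | apply: rann_gen_majorant].
Qed.

End Corner.

Lemma cornerP p y :
  is_proj p -> corner mul p y <-> p ⋅ y = y /\ y ⋅ p = y.
Proof.
move=> [pp _]; split=> [[a ->] | [py yp]]; last by exists y; rewrite yp py.
by rewrite !mulA pp -!mulA pp.
Qed.

Lemma graded_rickart_unit : graded_rickart mul star G ->
  exists2 u, hproj u & forall y, u ⋅ y = y /\ y ⋅ u = y.
Proof.
move=> rick.
have [u [_ [u_hproj u_gen]]] := rick 0 I (ex_intro _ 0 (grad0 hg 0)).
have [[uu su] _] := u_hproj.
have uy y : u ⋅ y = y.
  have /(u_gen y).1 [z [_ ->]] : whole y /\ (forall x, x = 0 -> x ⋅ y = 0).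
    by split=> // _ ->; apply: (mul0l hs).
  by rewrite mulA uu.
exists u => // y; split; first exact: uy.
by rewrite -[y](starK hs) -su -(starM hs) uy.
Qed.

End Graded.

Theorem mainTheorem6 (Gam A : zmodType) (mul : A -> A -> A) (star : A -> A)
    (G : Gam -> A -> Prop)
    (HA : is_graded_star_ring mul star G) :
  (no_inf_orth mul star G (@whole A) ->
     (graded_rickart mul star G <-> graded_baer mul star G)) /\
  ((forall p, hproj mul star G p -> no_inf_orth mul star G (corner mul p)) ->
     (graded_locally_rickart mul star G <-> graded_locally_baer mul star G)).
Proof.
case: HA => hs hg hmul _; split=> noinf.
  split=> [rick | ]; last exact: graded_rickart_of_baer.
  have [u u_hproj u_unit] := graded_rickart_unit hs hg rick.
  have u_whole y : whole y <-> mul u y = y /\ mul y u = y by split=> // _.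
  exact: (corner_graded_baer hs hg hmul (proj1 u_hproj)
    (hproj_grade0 hg hmul u_hproj) u_whole rick noinf).
split=> [rick p p_hproj | baer p p_hproj].
  2: exact/graded_rickart_of_baer/baer.
have p_corner y := cornerP hs y (proj1 p_hproj).
exact: (corner_graded_baer hs hg hmul (proj1 p_hproj)
  (hproj_grade0 hg hmul p_hproj) p_corner (rick _ p_hproj) (noinf _ p_hproj)).
Qed.
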